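(* Let $F$, $H$, $X$, $\Omega$, $Q$ and the sequences generated by the IneIREG method be as described in the context, and suppose $H$ is $\mu$-strongly monotone for some $\mu>0$. Suppose $0<\lambda_k<1/L_k$ for all $k\ge0$, where $L_k:=L_F+\eta_kL_H$; and $\alpha_0\in[0,1]$ and $\alpha_{k+1}\le(1-\beta_k)\alpha_k$ for all $k\ge0$, where $\beta_k:=\big(\frac{1}{1-\lambda_k^2L_k^2}+\frac{1}{2\lambda_k\eta_k\mu}\big)^{-1}$. Define $p_{-1}:=1$, $p_k:=\big(\prod_{i=0}^k(1-\beta_i)\big)^{-1}$ for $k\ge0$, and for $k\ge1$, $\Lambda_k:=\sum_{j=0}^{k-1}\lambda_j\eta_jp_j$, $\overline y_k:=\Lambda_k^{-1}\sum_{j=0}^{k-1}\lambda_j\eta_jp_jy_j$. Then for all $k\ge1$, $$-B_H\,\mathrm{dist}(\overline y_k,Q)\le\mathrm{Gap}(\overline y_k,H,Q)\le\frac{1}{\Lambda_k}\Big(\frac{D_X^2+\sum_{j=0}^{k-1}p_{j-1}\delta_j}{2}\Big).$$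
   Context: Work in $\mathbb{R}^n$ with Euclidean inner product $\langle\cdot,\cdot\rangle$ and norm $\|\cdot\|$. The maps $F\colon \mathrm{Dom}\,F\to\mathbb{R}^n$ and $H\colon\mathrm{Dom}\,H\to\mathbb{R}^n$ are monotone and Lipschitz continuous with constants $L_F>0$ and $L_H>0$; $H$ is $\mu$-strongly monotone means $\langle H(x)-H(y),x-y\rangle\ge\mu\|x-y\|^2$ for all $x,y\in\mathrm{Dom}\,H$. $X$ is a nonempty compact convex set and $\Omega$ a nonempty closed convex set with $X\subset\Omega\subset\mathrm{Dom}\,F\cap\mathrm{Dom}\,H$; $P_X,P_\Omega$ denote orthogonal projections. $Q:=\{x\in X:\langle F(x),y-x\rangle\ge0\ \forall y\in X\}$ is assumed nonempty. $D_X:=\sup_{x,y\in X}\|x-y\|$, $B_H:=\sup_{x\in Q}\|H(x)\|$, $\mathrm{dist}(y,Q)$ is the Euclidean distance to $Q$. $\mathrm{Gap}(z,H,Q):=\sup_{x\in Q}\langle H(x),z-x\rangle$. IneIREG method: start with $x_0=x_{-1}\in X$; for $k=0,1,\dots$, with parameters $\alpha_k\ge0$, $\lambda_k>0$, $\eta_k>0$, set $w_k=x_k+\alpha_k(x_k-x_{k-1})$, $w'_k=P_\Omega(w_k)$, $y_k=P_X\big(w_k-\lambda_k(F(w'_k)+\eta_kH(w'_k))\big)$, $x_{k+1}=P_X\big(w_k-\lambda_k(F(y_k)+\eta_kH(y_k))\big)$. Also $\delta_k:=\alpha_k(1+\alpha_k)\|x_k-x_{k-1}\|^2$ for $k\ge0$.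 *)

From HB Require Import structures.
From mathcomp Require Import all_boot all_order all_algebra.
From mathcomp Require Import all_classical all_reals all_analysis.
Set Implicit Arguments. Unset Strict Implicit. Unset Printing Implicit Defensive.
Import Order.TTheory GRing.Theory Num.Theory.
Import numFieldNormedType.Exports.
Local Open Scope classical_set_scope.
Local Open Scope ring_scope.

Section Defs.
Variables (R : realType) (n : nat).
Notation vec := 'rV[R]_n.

Definition dotv (u v : vec) : R := \sum_(i < n) u ord0 i * v ord0 i.
Definition enorm (u : vec) : R := Num.sqrt (dotv u u).

Definition convex_set_of (C : set vec) : Prop :=
  forall x y (t : R), C x -> C y -> 0 <= t <= 1 -> C (t *: x + (1 - t) *: y).

Definition is_eproj (C : set vec) (w p : vec) : Prop :=
  C p /\ forall x, C x -> enorm (w - p) <= enorm (w - x).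

Definition op_monotone (D : set vec) (G : vec -> vec) : Prop :=
  forall x y, D x -> D y -> 0 <= dotv (G x - G y) (x - y).

Definition op_strongly_monotone (D : set vec) (G : vec -> vec) (mu : R) : Prop :=
  forall x y, D x -> D y -> mu * enorm (x - y) ^+ 2 <= dotv (G x - G y) (x - y).

Definition op_lipschitz (D : set vec) (G : vec -> vec) (L : R) : Prop :=
  forall x y, D x -> D y -> enorm (G x - G y) <= L * enorm (x - y).

Definition VIsol (F : vec -> vec) (X : set vec) : set vec :=
  [set x | X x /\ forall y, X y -> 0 <= dotv (F x) (y - x)].

Definition diam_set (X : set vec) : R :=
  sup [set r | exists x y, X x /\ X y /\ r = enorm (x - y)].

Definition bound_on (H : vec -> vec) (Q : set vec) : R :=
  sup [set r | exists x, Q x /\ r = enorm (H x)].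

Definition dist_to (y : vec) (Q : set vec) : R :=
  inf [set r | exists x, Q x /\ r = enorm (y - x)].

Definition Gap (z : vec) (H : vec -> vec) (Q : set vec) : R :=
  sup [set r | exists x, Q x /\ r = dotv (H x) (z - x)].

End Defs.

(* Each IneIREG iteration is an extragradient step taken from the extrapolated
   point w_k.  For a solution z of VI(F, X), the two projection inequalities, the
   Lipschitz continuity of F + eta_k H and the (strong) monotonicity of F and H give
     |x_{k+1} - z|^2 <= (1 - beta_k) |w_k - z|^2 - 2 lambda_k eta_k <H z, y_k - z>,
   beta_k being the harmonic combination of the two coefficients
   1 - lambda_k^2 L_k^2 and 2 lambda_k eta_k mu that appear.  Expanding |w_k - z|^2
   and multiplying by p_k makes p_{k-1} (|x_k - z|^2 - alpha_k |x_{k-1} - z|^2) a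
   Lyapunov function, whose growth is paid by the p_{k-1} delta_k since
   p_k alpha_{k+1} <= p_{k-1} alpha_k.  Summing bounds
   sum_j lambda_j eta_j p_j <H z, y_j - z> by (D_X^2 + sum_j p_{j-1} delta_j) / 2,
   i.e. Lambda_k <H z, ybar_k - z>, hence the gap; the lower bound is
   Cauchy-Schwarz against the points of Q. *)

From HB Require Import structures.
From mathcomp Require Import all_boot all_order all_algebra.
From mathcomp Require Import all_classical all_reals all_analysis.
From mathcomp Require Import ring lra.
Set Implicit Arguments. Unset Strict Implicit. Unset Printing Implicit Defensive.
Import Order.TTheory GRing.Theory Num.Theory.
Import numFieldNormedType.Exports.
Local Open Scope classical_set_scope.
Local Open Scope ring_scope.

Ltac dotv_ring :=
  rewrite /dotv;
  repeat progress rewrite ?mulr_sumr ?mulr_suml -?sumrN -?big_split /=;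
  apply: eq_bigr => i _; rewrite ?mxE; ring.

Section Euclidean.
Variables (R : realType) (n : nat).
Notation vec := 'rV[R]_n.
Implicit Types u v w p x z : vec.

Lemma dotvv_ge0 u : 0 <= dotv u u.
Proof. by apply: sumr_ge0 => i _; rewrite -expr2 sqr_ge0. Qed.

Lemma dotvv_eq0 u : dotv u u = 0 -> u = 0.
Proof.
move=> /eqP; rewrite psumr_eq0 => [/allP u0|i _]; last by rewrite -expr2 sqr_ge0.
apply/rowP => i; have /implyP := u0 i (mem_index_enum i).
by rewrite mxE mulf_eq0 orbb => /(_ isT)/eqP.
Qed.

Lemma enorm_ge0 u : 0 <= enorm u.
Proof. exact: sqrtr_ge0. Qed.

Lemma enorm_sqr u : enorm u ^+ 2 = dotv u u.
Proof. by rewrite sqr_sqrtr // dotvv_ge0. Qed.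

Lemma enormZ (a : R) u : enorm (a *: u) = `|a| * enorm u.
Proof.
rewrite /enorm; have -> : dotv (a *: u) (a *: u) = a ^+ 2 * dotv u u by dotv_ring.
by rewrite sqrtrM ?sqr_ge0 // sqrtr_sqr.
Qed.

Lemma enorm_gt0 u : u != 0 -> 0 < enorm u.
Proof.
move=> u_neq0; rewrite lt_def enorm_ge0 andbT.
by apply: contraNneq u_neq0 => u0; apply/eqP/dotvv_eq0; rewrite -enorm_sqr u0 expr0n.
Qed.

Lemma dotv_le_enormM u v : dotv u v <= enorm u * enorm v.
Proof.
have dotv0 z : dotv 0 z = 0 /\ dotv z 0 = 0.
  by split; rewrite /dotv big1 // => i _; rewrite mxE ?mul0r ?mulr0.
have [->|u_neq0] := eqVneq u 0; first by rewrite (dotv0 v).1 mulr_ge0 ?enorm_ge0.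
have [->|v_neq0] := eqVneq v 0; first by rewrite (dotv0 u).2 mulr_ge0 ?enorm_ge0.
set a := enorm u; set b := enorm v.
have ab_gt0 : 0 < a * b by rewrite mulr_gt0 ?enorm_gt0.
(* expanding [|b u - a v|^2 >= 0] gives [2 a b (a b - <u, v>) >= 0] *)
have := dotvv_ge0 (b *: u - a *: v).
have -> : dotv (b *: u - a *: v) (b *: u - a *: v)
    = b ^+ 2 * dotv u u + a ^+ 2 * dotv v v - 2 * (a * b) * dotv u v by dotv_ring.
rewrite -!enorm_sqr -/a -/b; nra.
Qed.

Lemma enormD_le u v : enorm (u + v) <= enorm u + enorm v.
Proof.
rewrite -(ler_pXn2r (_ : 0 < 2)%N) ?nnegrE ?addr_ge0 ?enorm_ge0 //.
have -> : enorm (u + v) ^+ 2 = enorm u ^+ 2 + enorm v ^+ 2 + 2 * dotv u v.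
  by rewrite !enorm_sqr; dotv_ring.
have := dotv_le_enormM u v; lra.
Qed.

Lemma dotvZr (a : R) u v : dotv u (a *: v) = a * dotv u v.
Proof. dotv_ring. Qed.

Lemma dotvNl u v : dotv (- u) v = - dotv u v.
Proof. dotv_ring. Qed.

Lemma enormN u : enorm (- u) = enorm u.
Proof. by rewrite -scaleN1r enormZ normrN1 mul1r. Qed.

Lemma dotv_sumr (I : Type) (r : seq I) (P : pred I) u (f : I -> vec) :
  dotv u (\sum_(j <- r | P j) f j) = \sum_(j <- r | P j) dotv u (f j).
Proof.
rewrite /dotv; under eq_bigr => i _ do rewrite summxE mulr_sumr.
exact: exchange_big.
Qed.

Lemma ler_coord_mx_norm u (i : 'I_n) : `|u ord0 i| <= `|u|.
Proof.
rewrite /Num.norm /= mx_normrE.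
exact: (le_bigmax 0 (fun ij : 'I_1 * 'I_n => `|u ij.1 ij.2|) (ord0, i)).
Qed.

Lemma dotvv_le_mx_norm u : dotv u u <= n%:R * `|u| ^+ 2.
Proof.
rewrite mulr_natl -[n in _ *+ n]card_ord -sumr_const.
apply: ler_sum => i _; rewrite -expr2 -real_normK ?num_real //.
by rewrite lerXn2r ?nnegrE ?ler_coord_mx_norm.
Qed.

Lemma eproj_dotv_le0 (C : set vec) w p x :
  convex_set_of C -> is_eproj C w p -> C x -> dotv (w - p) (x - p) <= 0.
Proof.
move=> convC [Cp p_min] Cx.
set d := dotv (w - p) (x - p); set e := dotv (x - p) (x - p).
have e_ge0 : 0 <= e := dotvv_ge0 (x - p).
have le_t : forall t, 0 < t <= 1 -> 2 * d <= t * e.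
  move=> t /andP[t_gt0 t_le1].
  have Cq : C (t *: x + (1 - t) *: p) by apply: convC; rewrite ?(ltW t_gt0).
  have := p_min _ Cq; rewrite -(ler_pXn2r (_ : 0 < 2)%N) ?nnegrE ?enorm_ge0 //.
  have -> : enorm (w - (t *: x + (1 - t) *: p)) ^+ 2 = enorm (w - p) ^+ 2 - t * (2 * d - t * e).
    by rewrite !enorm_sqr /d /e; dotv_ring.
  by move=> h; rewrite -subr_ge0 -(pmulr_rge0 _ t_gt0); lra.
rewrite leNgt; apply/negP => d_gt0.
(* with [t = d / (d + e)] one gets [2 d <= d e / (d + e) <= d] *)
have de_gt0 : 0 < d + e by rewrite ltr_wpDr.
have t_bd : 0 < d / (d + e) <= 1 by rewrite divr_gt0 // ler_pdivrMr // mul1r lerDl.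
have := le_t _ t_bd; rewrite mulrAC ler_pdivlMr // => h.
have : d * e <= d * (d + e) by rewrite ler_pM2l // lerDr ltW.
nra.
Qed.

Lemma eproj_dist_le (C : set vec) w p x :
  convex_set_of C -> is_eproj C w p -> C x -> dotv (p - x) (p - x) <= dotv (w - x) (w - x).
Proof.
move=> convC proj_p Cx; have := eproj_dotv_le0 convC proj_p Cx.
have -> : dotv (w - x) (w - x)
    = dotv (p - x) (p - x) + dotv (w - p) (w - p) - 2 * dotv (w - p) (x - p) by dotv_ring.
have := dotvv_ge0 (w - p); lra.
Qed.

Lemma extragradient_dist_le (C : set vec) (lam : R) w g1 g2 y xp z :
  convex_set_of C -> is_eproj C (w - lam *: g1) y -> is_eproj C (w - lam *: g2) xp ->
  C z ->
  dotv (xp - z) (xp - z) <= dotv (w - z) (w - z) - dotv (w - y) (w - y)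
    + lam ^+ 2 * dotv (g1 - g2) (g1 - g2) - 2 * lam * dotv g2 (y - z).
Proof.
move=> convC proj_y proj_xp Cz.
have Cxp : C xp by case: proj_xp.
have := eproj_dotv_le0 convC proj_y Cxp.
have := eproj_dotv_le0 convC proj_xp Cz.
have := dotvv_ge0 (lam *: (g1 - g2) - (xp - y)).
have -> : dotv (xp - z) (xp - z) = dotv (w - z) (w - z) - dotv (w - y) (w - y)
    + lam ^+ 2 * dotv (g1 - g2) (g1 - g2) - 2 * lam * dotv g2 (y - z)
    + 2 * dotv (w - lam *: g2 - xp) (z - xp) + 2 * dotv (w - lam *: g1 - y) (xp - y)
    - dotv (lam *: (g1 - g2) - (xp - y)) (lam *: (g1 - g2) - (xp - y)) by dotv_ring.
lra.
Qed.

Lemma op_lipschitzD_scale (D1 D2 : set vec) (F H : vec -> vec) (LF LH eta : R) :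
  op_lipschitz D1 F LF -> op_lipschitz D2 H LH -> 0 <= eta ->
  op_lipschitz (D1 `&` D2) (fun v => F v + eta *: H v) (LF + eta * LH).
Proof.
move=> lipF lipH eta_ge0 a b [D1a D2a] [D1b D2b].
rewrite opprD addrACA -scalerBr mulrDl -mulrA.
apply: le_trans (enormD_le _ _) _; rewrite enormZ ger0_norm //.
by rewrite lerD ?ler_wpM2l ?lipF ?lipH.
Qed.

Lemma dotv_extrapolation (a : R) x x' z :
  dotv (x + a *: (x - x') - z) (x + a *: (x - x') - z)
  = (1 + a) * dotv (x - z) (x - z) - a * dotv (x' - z) (x' - z)
    + a * (1 + a) * dotv (x - x') (x - x').
Proof. dotv_ring. Qed.

Lemma harmonic_combination_le (a b : R) u v : 0 < a -> 0 < b ->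
  (a^-1 + b^-1)^-1 * dotv (u + v) (u + v) <= a * dotv u u + b * dotv v v.
Proof.
move=> a_gt0 b_gt0; have ab_gt0 : 0 < a + b by rewrite addr_gt0.
have -> : (a^-1 + b^-1)^-1 = a * b / (a + b) by field; rewrite !gt_eqF.
rewrite mulrAC ler_pdivrMr // -subr_ge0.
have -> : (a * dotv u u + b * dotv v v) * (a + b) - a * b * dotv (u + v) (u + v)
    = dotv (a *: u - b *: v) (a *: u - b *: v) by dotv_ring.
exact: dotvv_ge0.
Qed.

Lemma dotv_wavg k (c : nat -> R) (v : nat -> vec) u z :
  \sum_(j < k) c j != 0 ->
  dotv u ((\sum_(j < k) c j)^-1 *: \sum_(j < k) c j *: v j - z)
  = (\sum_(j < k) c j)^-1 * \sum_(j < k) c j * dotv u (v j - z).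
Proof.
move=> c_neq0.
have zE : z = (\sum_(j < k) c j)^-1 *: \sum_(j < k) c j *: z.
  by rewrite -scaler_suml scalerA mulVf ?scale1r.
rewrite {1}zE -scalerBr -sumrB dotvZr dotv_sumr; congr (_ * _); apply: eq_bigr => j _; dotv_ring.
Qed.

Lemma compact_enorm_subr_bounded (C : set vec) :
  compact C -> exists M, forall a b, C a -> C b -> enorm (a - b) <= M.
Proof.
move=> /compact_bounded[M [_ /(_ (`|M| + 1))]].
rewrite (le_lt_trans (ler_norm M)) ?ltrDl // => /(_ isT) C_le.
have M1_ge0 : 0 <= `|M| + 1 by rewrite addr_ge0.
exists (Num.sqrt (n%:R * (2 * (`|M| + 1)) ^+ 2)) => a b Ca Cb.
rewrite /enorm ler_sqrt ?mulr_ge0 ?sqr_ge0 //; apply: le_trans (dotvv_le_mx_norm _) _.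
rewrite ler_wpM2l // lerXn2r ?nnegrE ?mulr_ge0 //.
rewrite mulr2n mulrDl mul1r; apply: le_trans (ler_normB _ _) _.
by rewrite lerD ?C_le.
Qed.

Lemma diam_set_ge (C : set vec) a b :
  compact C -> C a -> C b -> enorm (a - b) <= diam_set C.
Proof.
move=> /compact_enorm_subr_bounded[M C_le] Ca Cb.
apply: sup_upper_bound; last by exists a, b.
split; first by exists (enorm (a - b)), a, b.
by exists M => _ [a' [b' [Ca' [Cb' ->]]]]; exact: C_le.
Qed.

Lemma op_lipschitz_compact_bounded (D C : set vec) (G : vec -> vec) (L : R) z0 :
  op_lipschitz D G L -> 0 <= L -> compact C -> C `<=` D -> C z0 ->
  exists B, forall z, C z -> enorm (G z) <= B.
Proof.
move=> lipG L_ge0 /compact_enorm_subr_bounded[M C_le] CD Cz0.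
exists (enorm (G z0) + L * M) => z Cz.
rewrite -(subrK (G z0) (G z)) addrC; apply: le_trans (enormD_le _ _) _.
rewrite lerD // (le_trans (lipG _ _ (CD _ Cz) (CD _ Cz0))) //.
by rewrite ler_wpM2l ?C_le.
Qed.

Lemma Gap_le (G : vec -> vec) (Q : set vec) z (U : R) :
  Q !=set0 -> (forall x, Q x -> dotv (G x) (z - x) <= U) -> Gap z G Q <= U.
Proof.
move=> [x0 Qx0] le_U; apply: ge_sup; first by exists (dotv (G x0) (z - x0)), x0.
by move=> _ [x [Qx ->]]; exact: le_U.
Qed.

Lemma Gap_ge_bound_dist (G : vec -> vec) (Q : set vec) z :
  Q !=set0 -> (exists U, forall x, Q x -> dotv (G x) (z - x) <= U) ->
  (exists B, forall x, Q x -> enorm (G x) <= B) ->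
  - bound_on G Q * dist_to z Q <= Gap z G Q.
Proof.
move=> [x0 Qx0] [U le_U] [B le_B].
have Gap_ge x : Q x -> dotv (G x) (z - x) <= Gap z G Q.
  move=> Qx; apply: sup_upper_bound; last by exists x.
  by split; [exists (dotv (G x0) (z - x0)), x0 | exists U => _ [y [Qy ->]]; exact: le_U].
have bound_ge x : Q x -> enorm (G x) <= bound_on G Q.
  move=> Qx; apply: sup_upper_bound; last by exists x.
  by split; [exists (enorm (G x0)), x0 | exists B => _ [y [Qy ->]]; exact: le_B].
have Gap_ge_dist x : Q x -> - bound_on G Q * enorm (z - x) <= Gap z G Q.
  move=> Qx; apply: le_trans (Gap_ge _ Qx).
  have := dotv_le_enormM (- G x) (z - x); rewrite dotvNl enormN.
  have := ler_wpM2r (enorm_ge0 (z - x)) (bound_ge _ Qx); lra.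
have [bound0|bound_neq0] := eqVneq (bound_on G Q) 0.
  by have := Gap_ge_dist _ Qx0; rewrite bound0 oppr0 !mul0r.
have bound_gt0 : 0 < bound_on G Q.
  by rewrite lt_def bound_neq0 (le_trans (enorm_ge0 _) (bound_ge _ Qx0)).
have : - Gap z G Q / bound_on G Q <= dist_to z Q.
  apply: lb_le_inf; first by exists (enorm (z - x0)), x0.
  by move=> _ [x [Qx ->]]; rewrite ler_pdivrMr //; have := Gap_ge_dist _ Qx; lra.
by rewrite ler_pdivrMr // => h; lra.
Qed.

End Euclidean.

Lemma inertial_descent_sum_ge (R : realFieldType) (u phi a e : nat -> R) (D2 : R) k :
  (forall j, 0 <= phi j <= D2) -> (forall j, 0 <= u j) -> u 0%N = 1 ->
  (forall j, 0 <= a j) -> a 0%N <= 1 -> (forall j, a j.+1 <= a j) ->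
  (forall j, u j.+1 * phi j.+1 <= u j * phi j + a j * (phi j - phi j.-1) + e j) ->
  0 <= D2 + \sum_(j < k) e j.
Proof.
move=> phi_bd u_ge0 u0 a_ge0 a0_le1 a_noninc descent.
(* [u K phi K - a K phi (K - 1)] is the Lyapunov function of the inertial scheme *)
have lyap K : u K * phi K - a K * phi K.-1 <= (1 - a K) * D2 + \sum_(j < K) e j.
  elim: K => [|K IH].
    have [_ phi0_le] := andP (phi_bd 0%N).
    have := ler_wpM2l (_ : 0 <= 1 - a 0%N) phi0_le; rewrite big_ord0 u0 /=; lra.
  have [_ phiK_le] := andP (phi_bd K).
  have := ler_wpM2l (_ : 0 <= a K - a K.+1) phiK_le.
  have := descent K; rewrite big_ord_recr /= subr_ge0 a_noninc; lra.
have [phik_ge0 _] := andP (phi_bd k); have [_ phik1_le] := andP (phi_bd k.-1).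
have := lyap k; have := mulr_ge0 (u_ge0 k) phik_ge0.
have := ler_wpM2l (a_ge0 k) phik1_le; lra.
Qed.

Section IneIREG.
Variables (R : realType) (n : nat).
Notation vec := 'rV[R]_n.
Variables (F H : vec -> vec) (DomF DomH X Omega : set vec) (LF LH mu : R).
Variables (alpha lambda eta : nat -> R) (x wp y : nat -> vec).
Hypotheses (LF_gt0 : 0 < LF) (LH_gt0 : 0 < LH) (mu_gt0 : 0 < mu).
Hypotheses (monoF : op_monotone DomF F) (lipF : op_lipschitz DomF F LF).
Hypotheses (lipH : op_lipschitz DomH H LH) (smonoH : op_strongly_monotone DomH H mu).
Hypotheses (compactX : compact X) (convX : convex_set_of X) (convO : convex_set_of Omega).
Hypotheses (XO : X `<=` Omega) (ODom : Omega `<=` DomF `&` DomH).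
Hypotheses (alpha_ge0 : forall k, 0 <= alpha k) (lambda_gt0 : forall k, 0 < lambda k).
Hypotheses (eta_gt0 : forall k, 0 < eta k).

Local Notation w k := (x k + alpha k *: (x k - x k.-1)).
Local Notation G k v := (F v + eta k *: H v).
Local Notation L k := (LF + eta k * LH).
Local Notation beta k := (((1 - lambda k ^+ 2 * L k ^+ 2)^-1
                           + (2 * lambda k * eta k * mu)^-1)^-1).
Local Notation P j := ((\prod_(i < j) (1 - beta i))^-1).
Local Notation delta k := (alpha k * (1 + alpha k) * enorm (x k - x k.-1) ^+ 2).
Local Notation Q := (VIsol F X).

Hypothesis X_x0 : X (x 0).
Hypothesis iteration : forall k,
  is_eproj Omega (w k) (wp k) /\
  is_eproj X (w k - lambda k *: G k (wp k)) (y k) /\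
  is_eproj X (w k - lambda k *: G k (y k)) (x k.+1).
Hypothesis lambda_lt : forall k, lambda k < (L k)^-1.
Hypotheses (alpha0_le1 : alpha 0 <= 1) (alpha_decr : forall k, alpha k.+1 <= (1 - beta k) * alpha k).

Lemma x_in_X k : X (x k).
Proof. by elim: k => [|k IH] //; have [_ [_ []]] := iteration k. Qed.

Lemma y_in_X k : X (y k).
Proof. by have [_ [[]]] := iteration k. Qed.

Lemma descent_coef_gt0 k : 0 < 1 - lambda k ^+ 2 * L k ^+ 2.
Proof.
have L_gt0 : 0 < L k by rewrite addr_gt0 ?mulr_gt0.
have := lambda_lt k; rewrite -(ltr_pM2r L_gt0) mulVf ?gt_eqF // => lamL_lt1.
by rewrite subr_gt0 -exprMn expr_lt1 ?mulr_ge0 ?ltW.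
Qed.

Lemma one_sub_beta_gt0 k : 0 < 1 - beta k.
Proof.
set a := 1 - lambda k ^+ 2 * _; set b := 2 * lambda k * eta k * mu.
have a_gt0 : 0 < a := descent_coef_gt0 k.
have b_gt0 : 0 < b by rewrite !mulr_gt0.
have a_le1 : a <= 1 by rewrite gerBl mulr_ge0 ?sqr_ge0.
have s_gt0 : 0 < a^-1 + b^-1 by rewrite addr_gt0 ?invr_gt0.
rewrite subr_gt0 (lt_le_trans _ a_le1) // -[ltRHS]invrK ltf_pV2 ?posrE ?invr_gt0 //.
by rewrite ltrDl invr_gt0.
Qed.

Lemma P_gt0 j : 0 < P j.
Proof. by rewrite invr_gt0 prodr_gt0 // => i _; exact: one_sub_beta_gt0. Qed.

Lemma P_succ j : P j.+1 * (1 - beta j) = P j.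
Proof. by rewrite big_ord_recr /= invfM divfK // gt_eqF ?one_sub_beta_gt0. Qed.

Lemma iteration_descent z k : Q z ->
  dotv (x k.+1 - z) (x k.+1 - z)
  <= (1 - beta k) * dotv (w k - z) (w k - z) - 2 * lambda k * eta k * dotv (H z) (y k - z).
Proof.
move=> [Xz z_sol]; have Xy := y_in_X k.
have [proj_wp [proj_y proj_x]] := iteration k.
have [DFwp DHwp] : DomF (wp k) /\ DomH (wp k) by case: proj_wp => /ODom.
have [DFy DHy] := ODom (XO Xy); have [DFz DHz] := ODom (XO Xz).
have G_lip : dotv (G k (wp k) - G k (y k)) (G k (wp k) - G k (y k))
    <= L k ^+ 2 * dotv (w k - y k) (w k - y k).
  have L_ge0 : 0 <= L k by rewrite addr_ge0 ?mulr_ge0 ?ltW.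
  have : enorm (G k (wp k) - G k (y k)) ^+ 2 <= (L k * enorm (wp k - y k)) ^+ 2.
    rewrite lerXn2r ?nnegrE ?mulr_ge0 ?enorm_ge0 //.
    by apply: (op_lipschitzD_scale lipF lipH (ltW (eta_gt0 k))); split.
  rewrite exprMn !enorm_sqr => /le_trans; apply.
  by rewrite ler_wpM2l ?sqr_ge0 // (eproj_dist_le convO proj_wp (XO Xy)).
have G_mono : eta k * mu * dotv (y k - z) (y k - z) + eta k * dotv (H z) (y k - z)
    <= dotv (G k (y k)) (y k - z).
  have := ler_wpM2l (ltW (eta_gt0 k)) (smonoH DHy DHz).
  have := monoF DFy DFz; have := z_sol _ Xy; rewrite enorm_sqr.
  have -> : dotv (G k (y k)) (y k - z) = dotv (F (y k) - F z) (y k - z) + dotv (F z) (y k - z)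
      + eta k * dotv (H (y k) - H z) (y k - z) + eta k * dotv (H z) (y k - z) by dotv_ring.
  lra.
have lam2_ge0 : 0 <= 2 * lambda k by rewrite mulr_ge0 ?ltW.
have b_gt0 : 0 < 2 * lambda k * eta k * mu by rewrite !mulr_gt0.
have := extragradient_dist_le convX proj_y proj_x Xz.
have := ler_wpM2l (sqr_ge0 (lambda k)) G_lip.
have := ler_wpM2l lam2_ge0 G_mono.
have := harmonic_combination_le (w k - y k) (y k - z) (descent_coef_gt0 k) b_gt0.
rewrite addrA subrK; lra.
Qed.

Lemma dist_sqr_recursion z j : Q z ->
  P j.+1 * dotv (x j.+1 - z) (x j.+1 - z)
  <= P j * dotv (x j - z) (x j - z)
     + P j * alpha j * (dotv (x j - z) (x j - z) - dotv (x j.-1 - z) (x j.-1 - z))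
     + (P j * delta j - 2 * (lambda j * eta j * P j.+1 * dotv (H z) (y j - z))).
Proof.
move=> Qz; have := ler_wpM2l (ltW (P_gt0 j.+1)) (iteration_descent j Qz).
rewrite dotv_extrapolation mulrBr [_ * ((1 - _) * _)]mulrA P_succ enorm_sqr; lra.
Qed.

Lemma weighted_gap_sum_le z k : Q z ->
  \sum_(j < k) 2 * (lambda j * eta j * P j.+1 * dotv (H z) (y j - z))
  <= diam_set X ^+ 2 + \sum_(j < k) P j * delta j.
Proof.
move=> Qz; rewrite -subr_ge0 -addrA -sumrB.
have [Xz _] := Qz.
apply: (inertial_descent_sum_ge (u := fun j => P j) (a := fun j => P j * alpha j)
  (phi := fun j => dotv (x j - z) (x j - z))
  (e := fun j => P j * delta j - 2 * (lambda j * eta j * P j.+1 * dotv (H z) (y j - z))))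
  => [j|j||j||j|j].
- have D_ge0 := le_trans (enorm_ge0 _) (diam_set_ge compactX Xz Xz).
  rewrite dotvv_ge0 -enorm_sqr lerXn2r ?nnegrE ?enorm_ge0 //.
  exact: diam_set_ge compactX (x_in_X j) Xz.
- exact: ltW (P_gt0 j).
- by rewrite big_ord0 invr1.
- by rewrite mulr_ge0 ?alpha_ge0 ?ltW ?P_gt0.
- by rewrite big_ord0 invr1 mul1r.
- by rewrite -(P_succ j) -mulrA ler_wpM2l ?alpha_decr ?ltW ?P_gt0.
- exact: dist_sqr_recursion.
Qed.

End IneIREG.

Theorem proposition4p6 (R : realType) (n : nat)
  (F H : 'rV[R]_n -> 'rV[R]_n) (DomF DomH X Omega : set 'rV[R]_n)
  (LF LH mu : R) (alpha lambda eta : nat -> R)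
  (x wp y : nat -> 'rV[R]_n) :
  0 < LF -> 0 < LH ->
  op_monotone DomF F -> op_lipschitz DomF F LF ->
  op_monotone DomH H -> op_lipschitz DomH H LH ->
  0 < mu -> op_strongly_monotone DomH H mu ->
  X !=set0 -> compact X -> convex_set_of X ->
  Omega !=set0 -> closed Omega -> convex_set_of Omega ->
  X `<=` Omega -> Omega `<=` DomF `&` DomH ->
  VIsol F X !=set0 ->
  (forall k, 0 <= alpha k) -> (forall k, 0 < lambda k) -> (forall k, 0 < eta k) ->
  X (x 0) ->
  (forall k, let w := x k + alpha k *: (x k - x k.-1) in
     is_eproj Omega w (wp k) /\
     is_eproj X (w - lambda k *: (F (wp k) + eta k *: H (wp k))) (y k) /\
     is_eproj X (w - lambda k *: (F (y k) + eta k *: H (y k))) (x k.+1)) ->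
  let L k := LF + eta k * LH in
  (forall k, lambda k < (L k)^-1) ->
  let beta k := ((1 - lambda k ^+ 2 * L k ^+ 2)^-1
                 + (2 * lambda k * eta k * mu)^-1)^-1 in
  0 <= alpha 0 <= 1 ->
  (forall k, alpha k.+1 <= (1 - beta k) * alpha k) ->
  (* P j = p_{j-1}: P 0 = p_{-1} = 1, P (k+1) = p_k *)
  let P j := (\prod_(i < j) (1 - beta i))^-1 in
  let delta k := alpha k * (1 + alpha k) * enorm (x k - x k.-1) ^+ 2 in
  let Q := VIsol F X in
  forall k, (1 <= k)%N ->
  let Lam := \sum_(j < k) lambda j * eta j * P j.+1 in
  let ybar := Lam^-1 *: \sum_(j < k) (lambda j * eta j * P j.+1) *: y j in
  - bound_on H Q * dist_to ybar Q <= Gap ybar H Q /\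
  Gap ybar H Q <= Lam^-1 * ((diam_set X ^+ 2 + \sum_(j < k) P j * delta j) / 2).
Proof.
move=> LF_gt0 LH_gt0 monoF lipF _ lipH mu_gt0 smonoH _ compactX convX _ _ convO XO ODom
  Q_neq0 alpha_ge0 lambda_gt0 eta_gt0 X_x0 iteration L lambda_lt beta alpha0 alpha_decr
  P delta Q k k_ge1 Lam ybar.
have [_ alpha0_le1] := andP alpha0.
have gap_sum := weighted_gap_sum_le LF_gt0 LH_gt0 mu_gt0 monoF lipF lipH smonoH compactX
  convX convO XO ODom alpha_ge0 lambda_gt0 eta_gt0 X_x0 iteration lambda_lt alpha0_le1
  alpha_decr.
have c_gt0 j : 0 < lambda j * eta j * P j.+1 by rewrite !mulr_gt0 //; apply: P_gt0.
have Lam_gt0 : 0 < Lam.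
  rewrite /Lam -(subnK k_ge1) addn1 big_ord_recr /= ltr_wpDl //.
  by rewrite sumr_ge0 // => j _; rewrite ltW.
have gap_ub z : Q z ->
    dotv (H z) (ybar - z) <= Lam^-1 * ((diam_set X ^+ 2 + \sum_(j < k) P j * delta j) / 2).
  move=> Qz; rewrite /ybar /Lam (dotv_wavg (c := fun j => lambda j * eta j * P j.+1)) /=.
    by rewrite ler_pM2l ?invr_gt0 // ler_pdivlMr // mulrC mulr_sumr gap_sum.
  by rewrite gt_eqF.
split; last exact: Gap_le Q_neq0 gap_ub.
apply: Gap_ge_bound_dist Q_neq0 (ex_intro _ _ gap_ub) _.
have [B H_le] : exists B, forall v, X v -> enorm (H v) <= B.
  by apply: op_lipschitz_compact_bounded lipH (ltW LH_gt0) compactX _ X_x0 => v /XO /ODom[].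
by exists B => v [/H_le].
Qed.
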